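(* For every program $p$, environment $\sigma$ and time instant $t\in\mathbb{R}_{\ge0}$, at most one of the reduction rules of the small-step semantics is applicable to $(p,\sigma,t)$.
   Context: Syntax. Fix variables $\mathcal{X}=\{x_1,\dots,x_n\}$. Linear terms: $s::= r\mid r\cdot x\mid s_1+s_2$ ($r\in\mathbb{R}$, $x\in\mathcal{X}$). Atomic programs: assignments $x:=s$ and differential statements $\bar x'=\bar u\ \mathtt{for}\ s$ (i.e. $x_1'=u_1,\dots,x_n'=u_n\ \mathtt{for}\ s$). Programs: $p::= a\mid p;q\mid \mathtt{if}\ b\ \mathtt{then}\ p\ \mathtt{else}\ q\mid \mathtt{while}\ b\ \mathtt{do}\ p$, with $a$ atomic and $b$ in the free Boolean algebra generated by atoms $s_1\le s_2$, $s_1\ge s_2$. Environments $\sigma\colon\mathcal{X}\to\mathbb{R}$; $s\sigma$, $b\sigma$ evaluation; $\sigma\triangledown[\bar v/\bar x]$ update; $\phi_\sigma\colon[0,\infty)\to\mathbb{R}^n$ the solution of $\bar x'=\bar u$ with initial value $(\sigma(x_i))_i$. The small-step semantics consists of the following rules on triples $(p,\sigma,t)$ ($p$ a program or $\mathit{skip}$/$\mathit{stop}$, $t\in\mathbb{R}_{\ge0}$): (asg) $(x:=s,\sigma,t)\to(\mathit{skip},\sigma\triangledown[s\sigma/x],t)$; (diff-stop) $(\bar x'=\bar u\ \mathtt{for}\ s,\sigma,t)\to(\mathit{stop},\sigma\triangledown[\phi_\sigma(t)/\bar x],0)$ if $t<s\sigma$; (diff-skip) $(\bar x'=\bar u\ \mathtt{for}\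 s,\sigma,t)\to(\mathit{skip},\sigma\triangledown[\phi_\sigma(s\sigma)/\bar x],t-s\sigma)$ if $t\ge s\sigma$; (if-true/if-false) $(\mathtt{if}\ b\ \mathtt{then}\ p\ \mathtt{else}\ q,\sigma,t)\to(p,\sigma,t)$ if $b\sigma=\top$, $\to(q,\sigma,t)$ if $b\sigma=\bot$; (wh-true) $(\mathtt{while}\ b\ \mathtt{do}\ p,\sigma,t)\to(p;\mathtt{while}\ b\ \mathtt{do}\ p,\sigma,t)$ if $b\sigma=\top$; (wh-false) $(\mathtt{while}\ b\ \mathtt{do}\ p,\sigma,t)\to(\mathit{skip},\sigma,t)$ if $b\sigma=\bot$; (seq-stop) from $(p,\sigma,t)\to(\mathit{stop},\sigma',t')$ infer $(p;q,\sigma,t)\to(\mathit{stop},\sigma',t')$; (seq-skip) from $(p,\sigma,t)\to(\mathit{skip},\sigma',t')$ infer $(p;q,\sigma,t)\to(q,\sigma',t')$; (seq) from $(p,\sigma,t)\to(p',\sigma',t')$ with $p'\notin\{\mathit{skip},\mathit{stop}\}$ infer $(p;q,\sigma,t)\to(p';q,\sigma',t')$. *)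

From Stdlib Require Fin.
From Stdlib Require Import Reals ClassicalEpsilon.
From Coquelicot Require Import Coquelicot.
Open Scope R_scope.

Definition var (n : nat) := Fin.t n.
Definition env (n : nat) := var n -> R.

Inductive lterm (n : nat) : Type :=
| LConst : R -> lterm n
| LMul : R -> var n -> lterm n
| LPlus : lterm n -> lterm n -> lterm n.
Arguments LConst {n}. Arguments LMul {n}. Arguments LPlus {n}.

Fixpoint leval {n} (s : lterm n) (sg : env n) : R :=
  match s with
  | LConst r => r
  | LMul r x => r * sg x
  | LPlus s1 s2 => leval s1 sg + leval s2 sg
  end.

Inductive bexp (n : nat) : Type :=
| BLe : lterm n -> lterm n -> bexp n
| BGe : lterm n -> lterm n -> bexp n
| BTrue : bexp n
| BFalse : bexp n
| BNot : bexp n -> bexp n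
| BAnd : bexp n -> bexp n -> bexp n
| BOr : bexp n -> bexp n -> bexp n.
Arguments BLe {n}. Arguments BGe {n}. Arguments BTrue {n}. Arguments BFalse {n}.
Arguments BNot {n}. Arguments BAnd {n}. Arguments BOr {n}.

Fixpoint beval {n} (b : bexp n) (sg : env n) : bool :=
  match b with
  | BLe s1 s2 => if Rle_dec (leval s1 sg) (leval s2 sg) then true else false
  | BGe s1 s2 => if Rle_dec (leval s2 sg) (leval s1 sg) then true else false
  | BTrue => true
  | BFalse => false
  | BNot b => negb (beval b sg)
  | BAnd b1 b2 => andb (beval b1 sg) (beval b2 sg)
  | BOr b1 b2 => orb (beval b1 sg) (beval b2 sg)
  end.

(* Programs; a differential statement  x_1'=u_1,...,x_n'=u_n for s
   is  PDiff u s  with  u : var n -> lterm n. *)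
Inductive prog (n : nat) : Type :=
| PAsg : var n -> lterm n -> prog n
| PDiff : (var n -> lterm n) -> lterm n -> prog n
| PSeq : prog n -> prog n -> prog n
| PIf : bexp n -> prog n -> prog n -> prog n
| PWhile : bexp n -> prog n -> prog n.
Arguments PAsg {n}. Arguments PDiff {n}. Arguments PSeq {n}.
Arguments PIf {n}. Arguments PWhile {n}.

Inductive cterm (n : nat) : Type :=
| CProg : prog n -> cterm n
| CSkip : cterm n
| CStop : cterm n.
Arguments CProg {n}. Arguments CSkip {n}. Arguments CStop {n}.

Definition upd {n} (sg : env n) (x : var n) (v : R) : env n :=
  fun y => if Fin.eq_dec y x then v else sg y.

Definition is_solution {n} (u : var n -> lterm n) (sg : env n)
  (phi : R -> env n) : Prop :=
  phi 0 = sg /\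
  forall (t : R) (i : var n), is_derive (fun tau => phi tau i) t (leval (u i) (phi t)).

(* phi_sigma: the (unique, since the system is linear) solution *)
Definition sol {n} (u : var n -> lterm n) (sg : env n) : R -> env n :=
  epsilon (inhabits (fun _ _ => 0)) (is_solution u sg).

Inductive rule : Type :=
| R_asg | R_diff_stop | R_diff_skip | R_if_true | R_if_false
| R_wh_true | R_wh_false | R_seq_stop | R_seq_skip | R_seq.

(* step r p sg t c sg' t' : (p,sg,t) -> (c,sg',t') by a derivation whose
   last rule is r. *)
Inductive step {n : nat} : rule -> prog n -> env n -> R -> cterm n -> env n -> R -> Prop :=
| st_asg : forall x s sg t,
    step R_asg (PAsg x s) sg t CSkip (upd sg x (leval s sg)) t
| st_diff_stop : forall u s sg t,
    t < leval s sg ->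
    step R_diff_stop (PDiff u s) sg t CStop (sol u sg t) 0
| st_diff_skip : forall u s sg t,
    t >= leval s sg ->
    step R_diff_skip (PDiff u s) sg t CSkip (sol u sg (leval s sg)) (t - leval s sg)
| st_if_true : forall b p q sg t,
    beval b sg = true -> step R_if_true (PIf b p q) sg t (CProg p) sg t
| st_if_false : forall b p q sg t,
    beval b sg = false -> step R_if_false (PIf b p q) sg t (CProg q) sg t
| st_wh_true : forall b p sg t,
    beval b sg = true ->
    step R_wh_true (PWhile b p) sg t (CProg (PSeq p (PWhile b p))) sg t
| st_wh_false : forall b p sg t,
    beval b sg = false -> step R_wh_false (PWhile b p) sg t CSkip sg t
| st_seq_stop : forall r p q sg t sg' t',
    step r p sg t CStop sg' t' -> step R_seq_stop (PSeq p q) sg t CStop sg' t'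
| st_seq_skip : forall r p q sg t sg' t',
    step r p sg t CSkip sg' t' -> step R_seq_skip (PSeq p q) sg t (CProg q) sg' t'
| st_seq : forall r p p' q sg t sg' t',
    step r p sg t (CProg p') sg' t' ->
    step R_seq (PSeq p q) sg t (CProg (PSeq p' q)) sg' t'.

Definition applicable {n} (r : rule) (p : prog n) (sg : env n) (t : R) : Prop :=
  exists c sg' t', step r p sg t c sg' t'.

(** For an assignment, a differential statement, a conditional or a loop, the
    rules that could fire have complementary side conditions ([t < s] versus
    [t >= s], [b] true versus false).  For a sequence [p; q] the rule is
    determined by the shape (program, skip or stop) of the result of the step
    of [p], and that shape is determined by the rule of that step, which is
    unique by induction. *)

From Stdlib Require Import Reals Lra.
Open Scope R_scope.

Definition seq_rule (r : rule) : rule :=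
  match r with
  | R_diff_stop | R_seq_stop => R_seq_stop
  | R_asg | R_diff_skip | R_wh_false => R_seq_skip
  | R_if_true | R_if_false | R_wh_true | R_seq_skip | R_seq => R_seq
  end.

Definition seq_rule_of_result {n} (c : cterm n) : rule :=
  match c with
  | CProg _ => R_seq
  | CSkip => R_seq_skip
  | CStop => R_seq_stop
  end.

Lemma seq_rule_step {n r} {p : prog n} {sg t c sg' t'} :
  step r p sg t c sg' t' -> seq_rule r = seq_rule_of_result c.
Proof. now destruct 1. Qed.

Lemma applicable_seq_inv {n} r (p q : prog n) sg t :
  applicable r (PSeq p q) sg t ->
  exists r0, applicable r0 p sg t /\ r = seq_rule r0.
Proof.
  intros (c & sg' & t' & H).
  inversion H; subst; clear H;
    match goal with
    | Hp : step ?r0 p _ _ _ _ _ |- _ =>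
        exists r0; split;
        [ do 3 eexists; exact Hp | symmetry; exact (seq_rule_step Hp) ]
    end.
Qed.

Lemma applicable_unique {n} (p : prog n) :
  forall sg t r1 r2,
  applicable r1 p sg t -> applicable r2 p sg t -> r1 = r2.
Proof.
  induction p as [| | p IHp q _ | | ]; intros sg t r1 r2 H1 H2.
  3: {
    apply applicable_seq_inv in H1 as (r1' & H1 & ->).
    apply applicable_seq_inv in H2 as (r2' & H2 & ->).
    now rewrite (IHp _ _ _ _ H1 H2).
  }
  all: destruct H1 as (c1 & s1 & t1 & H1), H2 as (c2 & s2 & t2 & H2);
    inversion H1; subst; inversion H2; subst; solve [reflexivity | lra | congruence].
Qed.

Theorem theorem1 : forall (n : nat) (p : prog n) (sg : env n) (t : R),
  0 <= t ->
  forall r1 r2 : rule, applicable r1 p sg t -> applicable r2 p sg t -> r1 = r2.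
Proof.
  intros n p sg t _.
  apply applicable_unique.
Qed.
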